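(* Let $\{ N_\alpha : A \to A \}_{\alpha \in \Omega}$ be a Nijenhuis family on an associative algebra $A$. Then the linear map $N: A \otimes \mathbf{k}\Omega \to A \otimes \mathbf{k}\Omega$, $N(a \otimes \alpha) = N_\alpha(a) \otimes \alpha$, is a Nijenhuis operator on the algebra $A \otimes \mathbf{k}\Omega$, i.e. $N(X)\bullet N(Y) = N\big(N(X)\bullet Y + X\bullet N(Y) - N(X\bullet Y)\big)$ for all $X,Y$.
   Context: $\Omega$ is a semigroup and $\mathbf{k}\Omega$ its semigroup algebra. A Nijenhuis family is a collection of linear maps $N_\alpha:A\to A$ with $N_\alpha(a) \cdot N_\beta(b) = N_{\alpha \beta} \big( N_\alpha (a) \cdot b + a \cdot N_\beta(b) - N_{\alpha \beta}(a \cdot b) \big)$ for all $a,b\in A$, $\alpha,\beta\in\Omega$. $A\otimes\mathbf{k}\Omega$ has product $(a \otimes \alpha) \bullet (b \otimes \beta) = a \cdot b \otimes \alpha \beta$. *)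

From HB Require Import structures.
From mathcomp Require Import all_boot all_order all_algebra.
From mathcomp Require Import finmap.
Set Implicit Arguments. Unset Strict Implicit. Unset Printing Implicit Defensive.
Import GRing.Theory.
Local Open Scope fset_scope.
Local Open Scope ring_scope.

(* A (x) kOmega is represented as the free A-module on Omega, i.e. finitely
   supported functions Omega -> A:  X = \sum_alpha X(alpha) (x) alpha. *)
Notation tensSG A Omega := {fsfun Omega -> A with 0%R}.

Section Tens.
Variables (Omega : choiceType) (A : pzRingType).

Definition tens_pure (a : A) (al : Omega) : tensSG A Omega :=
  [fsfun x in [fset al] => if x == al then a else 0 | 0].

Definition tens_add (X Y : tensSG A Omega) : tensSG A Omega :=
  [fsfun x in finsupp X `|` finsupp Y => X x + Y x | 0].

Definition tens_opp (X : tensSG A Omega) : tensSG A Omega :=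
  [fsfun x in finsupp X => - X x | 0].

Definition tens_sub (X Y : tensSG A Omega) := tens_add X (tens_opp Y).

(* (a (x) alpha) . (b (x) beta) = ab (x) alpha beta, extended bilinearly *)
Definition tens_mul (mul : Omega -> Omega -> Omega) (X Y : tensSG A Omega)
  : tensSG A Omega :=
  [fsfun g in [fset mul a b | a in finsupp X, b in finsupp Y] =>
     \sum_(a <- finsupp X) \sum_(b <- finsupp Y | mul a b == g) X a * Y b | 0].

Definition tens_N (N : Omega -> A -> A) (X : tensSG A Omega) : tensSG A Omega :=
  [fsfun a in finsupp X => N a (X a) | 0].

End Tens.

Definition nijenhuis_family (Omega : Type) (mul : Omega -> Omega -> Omega)
  (A : pzRingType) (N : Omega -> A -> A) : Prop :=
  forall (a b : A) (al be : Omega),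
    N al a * N be b =
    N (mul al be) (N al a * b + a * N be b - N (mul al be) (a * b)).

From HB Require Import structures.
From mathcomp Require Import all_boot all_order all_algebra.
From mathcomp Require Import finmap.
Local Open Scope ring_scope.
Import GRing.Theory.

(* The coefficient at [g] of each
   product is a sum over the pairs [(al, be)] with [al be = g], and on such a
   pair the Nijenhuis family identity for [(al, be)] involves [N_(al be) = N_g]
   only, which is additive and therefore commutes with these sums. *)

Section TensorCoefficients.
Context {Omega : choiceType} {A : pzRingType}.
Implicit Types (X Y : tensSG A Omega) (g : Omega).

Lemma tens_addE X Y g : tens_add X Y g = X g + Y g.
Proof.
rewrite /tens_add fsfunE; case: ifP => //.
move/negbT; rewrite inE /= !mem_finsupp negb_or !negbK => /andP[/eqP -> /eqP ->].
by rewrite addr0.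
Qed.

Lemma tens_oppE X g : tens_opp X g = - X g.
Proof.
rewrite /tens_opp fsfunE; case: ifP => //.
by move/negbT; rewrite mem_finsupp negbK => /eqP ->; rewrite oppr0.
Qed.

Lemma tens_subE X Y g : tens_sub X Y g = X g - Y g.
Proof. by rewrite /tens_sub tens_addE tens_oppE. Qed.

Lemma tens_NE (N : Omega -> A -> A) X g :
  (forall al, N al 0 = 0) -> tens_N N X g = N g (X g).
Proof.
move=> N0; rewrite /tens_N fsfunE; case: ifP => //.
by move/negbT; rewrite mem_finsupp negbK => /eqP ->; rewrite N0.
Qed.

Lemma finsupp_tens_N (N : Omega -> A -> A) X :
  (forall al, N al 0 = 0) -> (finsupp (tens_N N X) `<=` finsupp X)%fset.
Proof.
move=> N0; apply/fsubsetP => al; rewrite !mem_finsupp tens_NE //.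
by apply: contra => /eqP ->; rewrite N0.
Qed.

Lemma tens_mulE mul {X Y} {S T : {fset Omega}} {g} :
  (finsupp X `<=` S)%fset -> (finsupp Y `<=` T)%fset ->
  tens_mul mul X Y g = \sum_(al <- S) \sum_(be <- T | mul al be == g) X al * Y be.
Proof.
move=> sXS sYT.
have -> : tens_mul mul X Y g =
    \sum_(al <- finsupp X) \sum_(be <- finsupp Y | mul al be == g) X al * Y be.
  rewrite /tens_mul fsfunE; case: ifP => // /negbT g_notin_image.
  symmetry; rewrite big_seq; apply: big1 => al alX.
  rewrite big_seq_cond; apply: big1 => be /andP[beY /eqP albe_g].
  by case/negP: g_notin_image; rewrite -albe_g; apply: in_imfset2.
rewrite (big_fset_incl +%R sXS); last first.
  move=> al _; rewrite mem_finsupp negbK => /eqP ->.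
  by rewrite big1 // => be _; rewrite mul0r.
apply: eq_bigr => al _; rewrite !(big_mkcond (fun be => mul al be == g)) /=.
rewrite (big_fset_incl +%R sYT) // => be _.
by rewrite mem_finsupp negbK => /eqP ->; rewrite mulr0 if_same.
Qed.

End TensorCoefficients.

Section NijenhuisFamily.
Context {Omega : choiceType} {mul : Omega -> Omega -> Omega} {A : pzRingType}.
Variable N : Omega -> {additive A -> A}.
Local Notation Nf := (fun al => N al : A -> A).
Hypothesis HN : nijenhuis_family mul Nf.

Local Notation NN := (tens_N Nf).

Lemma tens_N_additiveE X g : NN X g = N g (X g).
Proof. by rewrite tens_NE // => al; rewrite raddf0. Qed.

Lemma tens_N_nijenhuis X Y :
  tens_mul mul (NN X) (NN Y) =
  NN (tens_sub (tens_add (tens_mul mul (NN X) Y) (tens_mul mul X (NN Y)))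
               (NN (tens_mul mul X Y))).
Proof.
have N0 al : N al 0 = 0 by rewrite raddf0.
have sNX := finsupp_tens_N Nf X N0; have sNY := finsupp_tens_N Nf Y N0.
have sX := fsubset_refl (finsupp X); have sY := fsubset_refl (finsupp Y).
apply/fsfunP => g.
rewrite !tens_N_additiveE tens_subE tens_addE tens_N_additiveE.
rewrite (tens_mulE mul sNX sNY) (tens_mulE mul sNX sY).
rewrite (tens_mulE mul sX sNY) (tens_mulE mul sX sY).
transitivity (\sum_(al <- finsupp X) \sum_(be <- finsupp Y | mul al be == g)
    N g (NN X al * Y be + X al * NN Y be - N g (X al * Y be))).
  apply: eq_bigr => al _; apply: eq_bigr => be /eqP <-.
  by rewrite !tens_N_additiveE HN.
rewrite !raddfB !raddfD !raddf_sum -!big_split /=.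
apply: eq_bigr => al _.
rewrite !raddf_sum -!big_split /=.
by apply: eq_bigr => be _; rewrite !raddfB !raddfD.
Qed.

End NijenhuisFamily.

Theorem proposition2p9 (k : comNzRingType) (A : algType k)
  (Omega : choiceType) (mul : Omega -> Omega -> Omega)
  (mulA : associative mul)
  (N : Omega -> {linear A -> A})
  (HN : nijenhuis_family mul (fun al => N al : A -> A)) :
  forall X Y : tensSG A Omega,
    let NN := tens_N (fun al => N al : A -> A) in
    tens_mul mul (NN X) (NN Y) =
    NN (tens_sub (tens_add (tens_mul mul (NN X) Y) (tens_mul mul X (NN Y)))
                 (NN (tens_mul mul X Y))).
Proof.
move=> X Y NN.
exact: tens_N_nijenhuis (fun al => N al : {additive A -> A}) HN X Y.
Qed.
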